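(* Let $\rho_0,\rho_1$ be two density matrices of the same dimension with $\|\rho_0-\rho_1\|_t=t$. Consider the following protocol: Alice tosses a uniformly random bit $b$, chooses a pure state from (a realization of) the mixture $\rho_b$, and sends it to Bob; then Bob returns a state to Alice, and Alice projects it onto the original pure state she sent to test whether Bob has manipulated it (she detects cheating if this projection fails). Then for any $0\le p\le 1$ there is a strategy for Bob such that he learns $b$ with advantage $t\sqrt{p}$, and his probability of detection is at most $\frac12\left(1-\sqrt{1-p}\right)$.
   Context: For an operator $A$, the trace norm is $\|A\|_t=\mathrm{Trace}(\sqrt{A^\dagger A})$. Bob's strategy may use ancilla systems and arbitrary unitaries; he returns a system of the original dimension to Alice and keeps the rest. Bob's advantage in learning $b$ is measured by the trace-norm distance $\|\sigma_0-\sigma_1\|_t$, where $\sigma_b$ is the density matrix of the system Bob retains conditioned on Alice's bit being $b$. *)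

From HB Require Import structures.
From mathcomp Require Import all_boot all_order all_algebra.
From mathcomp Require Import sesquilinear spectral.
From Stdlib Require Import ClassicalEpsilon.
Set Implicit Arguments. Unset Strict Implicit. Unset Printing Implicit Defensive.
Import Order.TTheory GRing.Theory Num.Theory.
Local Open Scope ring_scope.
Local Open Scope sesquilinear_scope.

Section QDefs.
Variable C : numClosedFieldType.

(* positive semidefinite: <v, A v> >= 0 for all v (over C this forces A Hermitian) *)
Definition psdmx n (A : 'M[C]_n) : Prop :=
  forall v : 'cV[C]_n, 0 <= (v ^t* *m A *m v) 0 0.

Definition density n (A : 'M[C]_n) : Prop := psdmx A /\ \tr A = 1.

Definition msqrt n (A : 'M[C]_n) : 'M[C]_n :=
  epsilon (inhabits 0) (fun S => psdmx S /\ S *m S = A).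

Definition tnorm n (A : 'M[C]_n) : C := \tr (msqrt (A ^t* *m A)).

(* bipartite system: index k : 'I_(n*m) corresponds to the pair (i,j),
   k = mxvec_index i j (first factor dimension n, second m) *)
Definition tpair n m (k : 'I_(n * m)) : 'I_n * 'I_m :=
  enum_val (cast_ord (esym (mxvec_cast n m)) k).

Definition tensmx n m (A : 'M[C]_n) (B : 'M[C]_m) : 'M[C]_(n * m) :=
  \matrix_(k, l) (A (tpair k).1 (tpair l).1 * B (tpair k).2 (tpair l).2).

Definition ptrace2 n m (M : 'M[C]_(n * m)) : 'M[C]_n :=
  \matrix_(i, i') \sum_(j < m) M (mxvec_index i j) (mxvec_index i' j).

Definition ptrace1 n m (M : 'M[C]_(n * m)) : 'M[C]_m :=
  \matrix_(j, j') \sum_(i < n) M (mxvec_index i j) (mxvec_index i j').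

Definition realization n (rho : 'M[C]_n) k (q : 'I_k -> C) (psi : 'I_k -> 'cV[C]_n)
  : Prop :=
  [/\ forall i, 0 <= q i,
      \sum_(i < k) q i = 1,
      forall i, (psi i ^t* *m psi i) 0 0 = 1 &
      \sum_(i < k) q i *: (psi i *m psi i ^t*) = rho].

(* Bob's strategy: ancilla (dim m) in state tau, unitary U on system (x) ancilla.
   Joint state after Bob's action when Alice sent psi: *)
Definition bob_out n m (U : 'M[C]_(n * m)) (tau : 'M[C]_m) (psi : 'cV[C]_n)
  : 'M[C]_(n * m) :=
  U *m tensmx (psi *m psi ^t*) tau *m U ^t*.

(* state Bob retains (the ancilla), conditioned on Alice's bit, whose
   ensemble is (q, psi) *)
Definition bob_kept n m (U : 'M[C]_(n * m)) (tau : 'M[C]_m) k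
  (q : 'I_k -> C) (psi : 'I_k -> 'cV[C]_n) : 'M[C]_m :=
  \sum_(i < k) q i *: ptrace1 (bob_out U tau (psi i)).

(* probability that Alice's projection onto the sent state fails,
   conditioned on her bit, whose ensemble is (q, psi) *)
Definition detect_cond n m (U : 'M[C]_(n * m)) (tau : 'M[C]_m) k
  (q : 'I_k -> C) (psi : 'I_k -> 'cV[C]_n) : C :=
  \sum_(i < k) q i *
    (1 - (psi i ^t* *m ptrace2 (bob_out U tau (psi i)) *m psi i) 0 0).

End QDefs.

(* Let D = rho0 - rho1 and let P project onto the eigenvectors of the traceless Hermitian
   matrix D with nonnegative eigenvalue, so that ||D||_t = 2 tr(P D).  Pick a = cos th and
   b = sin th with cos 2th = sqrt(1 - p) and sin 2th = sqrt p.  Bob attaches a qubit in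
   state |0> and applies U = P (x) R(th) + (1 - P) (x) R(-th), R being the rotation of the
   qubit.  The qubit he keeps is then tr(P rho_b) |x+><x+| + (1 - tr(P rho_b)) |x-><x-|
   with x+- = (a, +-b), and |x+><x+| - |x-><x-| = sin 2th sigma_x, so his two states differ
   by tr(P D) sqrt p sigma_x, whose trace norm is t sqrt p.  A pure state psi passes
   Alice's test with probability x^2 + 2 cos 2th x y + y^2, where x = <psi|P|psi> and
   y = 1 - x, and this is at least (1 + cos 2th) / 2. *)

From HB Require Import structures.
From mathcomp Require Import all_boot all_order all_algebra.
From mathcomp Require Import sesquilinear spectral.
From mathcomp Require Import ring.
From Stdlib Require Import ClassicalEpsilon.
Set Implicit Arguments. Unset Strict Implicit. Unset Printing Implicit Defensive.
Import Order.TTheory GRing.Theory Num.Theory.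
Local Open Scope ring_scope.
Local Open Scope sesquilinear_scope.

Section TensorProduct.
Variables (C : numClosedFieldType) (n m : nat).

Lemma tpair_mxvec_index (i : 'I_n) (j : 'I_m) : tpair (mxvec_index i j) = (i, j).
Proof. by rewrite /tpair /mxvec_index cast_ordK enum_rankK. Qed.

Lemma eq_mxvec_index (i i' : 'I_n) (j j' : 'I_m) :
  (mxvec_index i j == mxvec_index i' j') = (i == i') && (j == j').
Proof.
apply/eqP/andP => [E|[/eqP-> /eqP->]] //.
by have := congr1 (@tpair n m) E; rewrite !tpair_mxvec_index => -[-> ->].
Qed.

Lemma big_mxvec_index (F : 'I_(n * m) -> C) :
  \sum_k F k = \sum_i \sum_j F (mxvec_index i j).
Proof.
by rewrite (reindex _ (curry_mxvec_bij _ _)) pair_big /=; apply: eq_bigr => -[i j].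
Qed.

Lemma tensmxE (A : 'M[C]_n) (B : 'M[C]_m) i j i' j' :
  tensmx A B (mxvec_index i j) (mxvec_index i' j') = A i i' * B j j'.
Proof. by rewrite mxE !tpair_mxvec_index. Qed.

Lemma tensmx_mul (A A' : 'M[C]_n) (B B' : 'M[C]_m) :
  tensmx A B *m tensmx A' B' = tensmx (A *m A') (B *m B').
Proof.
apply/matrixP => k l; case/mxvec_indexP: k => i j; case/mxvec_indexP: l => i' j'.
rewrite tensmxE !mxE big_mxvec_index big_distrl /=; apply: eq_bigr => a _.
rewrite big_distrr /=; apply: eq_bigr => b _.
by rewrite !tensmxE mulrACA.
Qed.

Lemma trC_tensmx (A : 'M[C]_n) (B : 'M[C]_m) :
  (tensmx A B) ^t* = tensmx (A ^t*) (B ^t*).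
Proof.
apply/matrixP => k l; case/mxvec_indexP: k => i j; case/mxvec_indexP: l => i' j'.
by rewrite !mxE rmorphM.
Qed.

Lemma tensmxDl (A A' : 'M[C]_n) (B : 'M[C]_m) :
  tensmx (A + A') B = tensmx A B + tensmx A' B.
Proof. by apply/matrixP => k l; rewrite !mxE mulrDl. Qed.

Lemma tensmx0l (B : 'M[C]_m) : tensmx (0 : 'M[C]_n) B = 0.
Proof. by apply/matrixP => k l; rewrite !mxE mul0r. Qed.

Lemma tensmx1 : tensmx (1%:M : 'M[C]_n) (1%:M : 'M[C]_m) = 1%:M.
Proof.
apply/matrixP => k l; case/mxvec_indexP: k => i j; case/mxvec_indexP: l => i' j'.
by rewrite tensmxE !mxE eq_mxvec_index -natrM mulnb.
Qed.

Lemma ptrace1_tensmx (A : 'M[C]_n) (B : 'M[C]_m) : ptrace1 (tensmx A B) = \tr A *: B.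
Proof.
apply/matrixP => j j'; rewrite !mxE big_distrl /=; apply: eq_bigr => i _.
by rewrite tensmxE.
Qed.

Lemma ptrace2_tensmx (A : 'M[C]_n) (B : 'M[C]_m) : ptrace2 (tensmx A B) = \tr B *: A.
Proof.
apply/matrixP => i i'; rewrite !mxE big_distrl /=; apply: eq_bigr => j _.
by rewrite tensmxE mulrC.
Qed.

Lemma ptrace1D (M N : 'M[C]_(n * m)) : ptrace1 (M + N) = ptrace1 M + ptrace1 N.
Proof. by apply/matrixP => j j'; rewrite !mxE -big_split; apply: eq_bigr => i _; rewrite mxE. Qed.

Lemma ptrace2D (M N : 'M[C]_(n * m)) : ptrace2 (M + N) = ptrace2 M + ptrace2 N.
Proof. by apply/matrixP => i i'; rewrite !mxE -big_split; apply: eq_bigr => j _; rewrite mxE. Qed.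

End TensorProduct.

Section Braket.
Variable C : numClosedFieldType.

Definition braket n (u : 'cV[C]_n) (A : 'M[C]_n) (w : 'cV[C]_n) : C :=
  (u ^t* *m A *m w) 0 0.

Lemma trCmxD m n (A B : 'M[C]_(m, n)) : (A + B) ^t* = A ^t* + B ^t*.
Proof. by rewrite linearD /= map_mxD. Qed.

Lemma trCmxB m n (A B : 'M[C]_(m, n)) : (A - B) ^t* = A ^t* - B ^t*.
Proof. by rewrite linearB /= map_mxB. Qed.

Lemma mxtrace_unitary_conj n (P X : 'M[C]_n) :
  P \is unitarymx -> \tr (P ^t* *m X *m P) = \tr X.
Proof. by move=> P_unitary; rewrite mxtrace_mulC mulmxA (unitarymxP P_unitary) mul1mx. Qed.

Lemma braketE n (u : 'cV[C]_n) A w :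
  braket u A w = \sum_k \sum_l (u k 0)^* * A k l * w l 0.
Proof.
rewrite /braket mxE exchange_big /=; apply: eq_bigr => l _; rewrite mxE big_distrl /=.
by apply: eq_bigr => k _; rewrite !mxE.
Qed.

Lemma conjC_braket n (u : 'cV[C]_n) A w : (braket u A w)^* = braket w (A ^t*) u.
Proof.
rewrite !braketE rmorph_sum exchange_big /=; apply: eq_bigr => l _.
rewrite rmorph_sum; apply: eq_bigr => k _.
by rewrite !mxE !rmorphM /= conjCK; ring.
Qed.

Lemma braketDl n (u u' : 'cV[C]_n) A w : braket (u + u') A w = braket u A w + braket u' A w.
Proof. by rewrite /braket trCmxD !mulmxDl mxE. Qed.

Lemma braketDr n (u : 'cV[C]_n) A w w' : braket u A (w + w') = braket u A w + braket u A w'.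
Proof. by rewrite /braket mulmxDr mxE. Qed.

Lemma braketZl n (u : 'cV[C]_n) A w z : braket (z *: u) A w = z^* * braket u A w.
Proof. by rewrite /braket linearZ /= map_mxZ -!scalemxAl mxE. Qed.

Lemma braketZr n (u : 'cV[C]_n) A w z : braket u A (z *: w) = z * braket u A w.
Proof. by rewrite /braket -scalemxAr mxE. Qed.

Lemma braket0 n (u w : 'cV[C]_n) : braket u 0 w = 0.
Proof. by rewrite /braket mulmx0 mul0mx mxE. Qed.

Lemma braketD n (u : 'cV[C]_n) A B w : braket u (A + B) w = braket u A w + braket u B w.
Proof. by rewrite /braket mulmxDr mulmxDl mxE. Qed.

Lemma braketB n (u : 'cV[C]_n) A B w : braket u (A - B) w = braket u A w - braket u B w.
Proof. by rewrite /braket mulmxBr mulmxBl !mxE. Qed.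

Lemma braketZ n (u : 'cV[C]_n) z A w : braket u (z *: A) w = z * braket u A w.
Proof. by rewrite /braket -scalemxAr -scalemxAl mxE. Qed.

Lemma braket_mulmxr n (u : 'cV[C]_n) A B w : braket u (A *m B) w = braket u A (B *m w).
Proof. by rewrite /braket !mulmxA. Qed.

Lemma braket_mulmxl n (u : 'cV[C]_n) A B w : braket u (A *m B) w = braket (A ^t* *m u) B w.
Proof. by rewrite /braket trmx_mul map_mxM trmxCK !mulmxA. Qed.

Lemma braket_conjmx n (P A : 'M[C]_n) u w :
  braket u (P ^t* *m A *m P) w = braket (P *m u) A (P *m w).
Proof. by rewrite /braket trmx_mul map_mxM !mulmxA. Qed.

Lemma braket_delta n (A : 'M[C]_n) i j : braket (delta_mx i 0) A (delta_mx j 0) = A i j.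
Proof.
rewrite braketE (bigD1 i) //= [X in _ + X]big1 => [|k /negPf ki]; last first.
  by apply: big1 => l _; rewrite !mxE ki rmorph0 !mul0r.
rewrite addr0 (bigD1 j) //= [X in _ + X]big1 => [|l /negPf lj]; last by rewrite !mxE lj mulr0.
by rewrite !mxE !eqxx rmorph1 mul1r mulr1 addr0.
Qed.

Lemma braket_diag n (d : 'rV[C]_n) w :
  braket w (diag_mx d) w = \sum_i d 0 i * (w i 0 * (w i 0)^*).
Proof.
rewrite braketE; apply: eq_bigr => i _.
rewrite (bigD1 i) //= big1 => [|l /negPf li]; last by rewrite !mxE eq_sym li mulr0n mulr0 mul0r.
by rewrite !mxE eqxx mulr1n addr0; ring.
Qed.

Lemma braket_outer n (u v w : 'cV[C]_n) A B :
  braket u (A *m (v *m v ^t*) *m B) w = braket u A v * braket v B w.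
Proof.
have mx11_mul (X Y : 'M[C]_1) : (X *m Y) 0 0 = X 0 0 * Y 0 0 by rewrite mxE big_ord1.
by rewrite /braket -mx11_mul !mulmxA.
Qed.

Lemma mxtrace_outer n (v : 'cV[C]_n) A : \tr (A *m (v *m v ^t*)) = braket v A v.
Proof. by rewrite mulmxA mxtrace_mulC /braket mulmxA /mxtrace big_ord1. Qed.

Lemma mxtrace_mul_outer n (v : 'cV[C]_n) (A B : 'M[C]_n) :
  \tr (A *m (v *m v ^t*) *m B) = braket v (B *m A) v.
Proof. by rewrite mxtrace_mulC (mulmxA B) mxtrace_outer. Qed.

(* Polarization: the quadratic form of [A] at [e_i + z e_j], for [z = 1] and [z = 'i],
   determines [A i j]. *)
Lemma braket_eq0 n (A : 'M[C]_n) : (forall v, braket v A v = 0) -> A = 0.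
Proof.
move=> A0; apply/matrixP => i j; rewrite mxE.
have Aii := A0 (delta_mx i 0); rewrite braket_delta in Aii.
have Ajj := A0 (delta_mx j 0); rewrite braket_delta in Ajj.
have E z : braket (delta_mx i 0 + z *: delta_mx j 0) A (delta_mx i 0 + z *: delta_mx j 0)
   = z * A i j + z^* * A j i + z^* * z * A j j + A i i.
  by rewrite !braketDl !braketDr !braketZl !braketZr !braket_delta; ring.
have E1 := E 1; rewrite A0 conjC1 Aii Ajj in E1.
have Ei := E 'i; rewrite A0 conjCi Aii Ajj in Ei.
have : 2 * 'i * A i j = 0.
  have -> : 2 * 'i * A i j = 'i * (1 * A i j + 1 * A j i + 1 * 1 * 0 + 0)
     + ('i * A i j + - 'i * A j i + - 'i * 'i * 0 + 0) by ring.
  by rewrite -E1 -Ei mulr0 addr0.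
move/eqP; rewrite !mulf_eq0 pnatr_eq0 /=.
have iN0 : 'i != 0 :> C.
  by apply/eqP => i0; have /eqP := @sqrCi C; rewrite i0 expr0n eq_sym oppr_eq0 oner_eq0.
by rewrite (negPf iN0) /= => /eqP.
Qed.

End Braket.

Section PositiveSemidefinite.
Variable C : numClosedFieldType.

Lemma herm_spectral n (A : 'M[C]_n) : A ^t* = A ->
  exists P (d : 'rV[C]_n),
    [/\ P \is unitarymx, forall i, d 0 i \is Num.real & A = P ^t* *m diag_mx d *m P].
Proof.
move=> A_herm; have A_hsym : A \is hermsymmx.
  by apply/is_hermitianmxP; rewrite expr0 scale1r A_herm.
exists (spectralmx A), (spectral_diag A); split.
- exact: spectral_unitarymx.
- by move=> i; have /mxOverP := hermitian_spectral_diag_real A_hsym; apply.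
- have /hermitian_normalmx /orthomx_spectralP AE := A_hsym.
  by rewrite {1}AE invmx_unitary // spectral_unitarymx.
Qed.

Lemma psdmx_trC n (A : 'M[C]_n) : psdmx A -> A ^t* = A.
Proof.
move=> A_psd; apply/eqP; rewrite -subr_eq0; apply/eqP; apply: braket_eq0 => v.
by rewrite braketB -conjC_braket geC0_conj ?subrr //; apply: A_psd.
Qed.

Lemma psdmx_diag n (d : 'rV[C]_n) : (forall i, 0 <= d 0 i) -> psdmx (diag_mx d).
Proof.
move=> d_ge0 v; rewrite -/(braket _ _ _) braket_diag; apply: sumr_ge0 => i _.
by rewrite mulr_ge0 // mul_conjC_ge0.
Qed.

Lemma psdmx_conjmx n (P A : 'M[C]_n) : psdmx A -> psdmx (P ^t* *m A *m P).
Proof. by move=> A_psd v; rewrite -/(braket _ _ _) braket_conjmx; apply: A_psd. Qed.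

Lemma psdmx1 n : psdmx (1%:M : 'M[C]_n).
Proof. by rewrite -diag_const_mx; apply: psdmx_diag => i; rewrite mxE ler01. Qed.

Lemma psdmx_proj n (P : 'M[C]_n) : P ^t* = P -> P *m P = P -> psdmx P.
Proof.
move=> P_trC P_idem; have -> : P = P ^t* *m 1%:M *m P by rewrite mulmx1 P_trC P_idem.
by apply: psdmx_conjmx; apply: psdmx1.
Qed.

Lemma psdmx_kernel n (S : 'M[C]_n) v : psdmx S -> braket v S v = 0 -> S *m v = 0.
Proof.
move=> S_psd; have [P [d [P_unitary _ SE]]] := herm_spectral (psdmx_trC S_psd).
have d_ge0 i : 0 <= d 0 i.
  have := S_psd (P ^t* *m delta_mx i 0); rewrite -/(braket _ _ _) SE braket_conjmx.
  by rewrite mulmxA (unitarymxP P_unitary) mul1mx braket_delta mxE eqxx mulr1n.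
rewrite SE braket_conjmx braket_diag => /eqP.
rewrite psumr_eq0 => [/allP dv0|i _]; last by rewrite mulr_ge0 // mul_conjC_ge0.
suff dPv0 : diag_mx d *m (P *m v) = 0 by rewrite -!mulmxA dPv0 mulmx0.
apply/matrixP => i j; rewrite ord1 mul_diag_mx mxE [RHS]mxE.
have := dv0 i (mem_index_enum _); rewrite mulf_eq0 mul_conjC_eq0.
by case/orP => /eqP ->; rewrite ?mul0r ?mulr0.
Qed.

(* If [S^2 = T^2] then [W = S - T] satisfies [S W + W T = 0]; evaluating this at an
   eigenvector [v] of [W] with eigenvalue [w != 0] gives [w (<v|S|v> + <v|T|v>) = 0],
   so [S v = T v = 0] and hence [W v = 0], a contradiction. *)
Lemma psdmx_sqrt_unique n (S T : 'M[C]_n) :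
  psdmx S -> psdmx T -> S *m S = T *m T -> S = T.
Proof.
move=> S_psd T_psd STsq; apply/eqP; rewrite -subr_eq0; apply/eqP.
set W := S - T.
have WC : W ^t* = W by rewrite /W trCmxB (psdmx_trC S_psd) (psdmx_trC T_psd).
have [P [w [P_unitary w_real WE]]] := herm_spectral WC.
suff w0 : w = 0 by rewrite WE w0 raddf0 mulmx0 mul0mx.
apply/rowP => i; rewrite [RHS]mxE; apply/eqP; apply: contraT => wN0.
pose v := P ^t* *m (delta_mx i 0 : 'cV[C]_n).
have Pv : P *m v = delta_mx i 0 by rewrite /v mulmxA (unitarymxP P_unitary) mul1mx.
have Wv : W *m v = w 0 i *: v.
  rewrite WE -!mulmxA Pv (_ : diag_mx w *m _ = w 0 i *: delta_mx i 0) ?scalemxAr //.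
  apply/matrixP => k l.
  by rewrite mul_diag_mx !mxE ord1; case: (eqVneq k i) => [->|]; rewrite ?mulr1 ?mulr0.
have : braket v (S *m W + W *m T) v = 0.
  by rewrite /W mulmxBr mulmxBl STsq addrA subrK subrr /braket mulmx0 mul0mx mxE.
rewrite braketD braket_mulmxr braket_mulmxl WC Wv braketZr braketZl conj_Creal // -mulrDr.
move/eqP; rewrite mulf_eq0 (negPf wN0) /= paddr_eq0; [|exact: S_psd|exact: T_psd].
case/andP => /eqP /(psdmx_kernel S_psd) Sv /eqP /(psdmx_kernel T_psd) Tv.
have : W *m v = 0 by rewrite /W mulmxBl Sv Tv subrr.
rewrite Wv => /eqP; rewrite scaler_eq0 (negPf wN0) /= => /eqP v0.
move: Pv; rewrite v0 mulmx0 => /matrixP /(_ i 0); rewrite !mxE !eqxx /= => /eqP.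
by rewrite eq_sym oner_eq0.
Qed.

Lemma tnormE n (A S : 'M[C]_n) : psdmx S -> S *m S = A ^t* *m A -> tnorm A = \tr S.
Proof.
move=> S_psd S_sq; rewrite /tnorm /msqrt.
have [R_psd R_sq] := epsilon_spec (inhabits 0)
  (fun R => psdmx R /\ R *m R = A ^t* *m A) (ex_intro _ S (conj S_psd S_sq)).
by rewrite (psdmx_sqrt_unique R_psd S_psd) // R_sq S_sq.
Qed.

End PositiveSemidefinite.

Section Projector.
Variables (C : numClosedFieldType) (n : nat) (P : 'M[C]_n).
Hypotheses (P_trC : P ^t* = P) (P_idem : P *m P = P).

Lemma proj_compl_trC : (1%:M - P) ^t* = 1%:M - P.
Proof. by rewrite trCmxB P_trC trmx1 map_mx1. Qed.

Lemma proj_mul_compl : P *m (1%:M - P) = 0.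
Proof. by rewrite mulmxBr mulmx1 P_idem subrr. Qed.

Lemma compl_mul_proj : (1%:M - P) *m P = 0.
Proof. by rewrite mulmxBl mul1mx P_idem subrr. Qed.

Lemma proj_compl_idem : (1%:M - P) *m (1%:M - P) = 1%:M - P.
Proof. by rewrite {1}mulmxBl mul1mx proj_mul_compl subr0. Qed.

End Projector.

Section NonnegativeSpectralProjector.
Variables (C : numClosedFieldType) (n : nat) (U : 'M[C]_n) (d : 'rV[C]_n).
Hypothesis U_unitary : U \is unitarymx.

Definition nonneg_proj : 'M[C]_n := U ^t* *m diag_mx (\row_i (0 <= d 0 i)%R%:R) *m U.

Lemma nonneg_proj_trC : nonneg_proj ^t* = nonneg_proj.
Proof.
rewrite /nonneg_proj !trmx_mul !map_mxM trmxCK tr_diag_mx map_diag_mx mulmxA.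
by congr (_ *m diag_mx _ *m _); apply/rowP => i; rewrite !mxE rmorph_nat.
Qed.

Lemma nonneg_proj_idem : nonneg_proj *m nonneg_proj = nonneg_proj.
Proof.
rewrite /nonneg_proj -!mulmxA (mulmxA U) (unitarymxP U_unitary) mul1mx.
rewrite (mulmxA (diag_mx _)) mulmx_diag mulmxA [RHS]mulmxA; congr (_ *m diag_mx _ *m _).
by apply/rowP => i; rewrite !mxE -natrM mulnb andbb.
Qed.

Variable A : 'M[C]_n.
Hypotheses (d_real : forall i, d 0 i \is Num.real) (AE : A = U ^t* *m diag_mx d *m U).

Lemma mxtrace_nonneg_proj_mul : \tr (nonneg_proj *m A) = \sum_i (0 <= d 0 i)%R%:R * d 0 i.
Proof.
rewrite /nonneg_proj AE -!mulmxA (mulmxA U) (unitarymxP U_unitary) mul1mx.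
rewrite (mulmxA (diag_mx _)) mulmx_diag mulmxA mxtrace_unitary_conj // mxtrace_diag.
by apply: eq_bigr => i _; rewrite !mxE.
Qed.

Lemma mxtrace_nonneg_proj_mul_ge0 : 0 <= \tr (nonneg_proj *m A).
Proof.
rewrite mxtrace_nonneg_proj_mul; apply: sumr_ge0 => i _.
by case: (boolP (0 <= d 0 i)) => [d_ge0|_]; rewrite ?mul1r ?mul0r.
Qed.

(* [sqrt (A^* A) = U^* |diag d| U], and [|x| = 2 [0 <= x] x - x] for real [x]. *)
Lemma tnorm_nonneg_proj : tnorm A = \tr (nonneg_proj *m A) *+ 2 - \tr A.
Proof.
pose absd : 'rV[C]_n := \row_i `|d 0 i|.
rewrite (@tnormE _ _ _ (U ^t* *m diag_mx absd *m U)).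
- rewrite mxtrace_nonneg_proj_mul AE !mxtrace_unitary_conj // !mxtrace_diag.
  rewrite -sumrMnl -sumrB; apply: eq_bigr => i _; rewrite mxE.
  have [d_ge0|d_lt0] /= := boolP (0 <= d 0 i).
  + by rewrite ger0_norm // mul1r mulr2n addrK.
  + rewrite ler0_norm ?mul0r ?mul0rn ?sub0r //.
    by move: (d_real i); rewrite realE (negPf d_lt0).
- by apply: psdmx_conjmx; apply: psdmx_diag => i; rewrite mxE normr_ge0.
- rewrite AE !trmx_mul !map_mxM trmxCK tr_diag_mx map_diag_mx.
  rewrite -!mulmxA (mulmxA U) (unitarymxP U_unitary) mul1mx.
  rewrite (mulmxA U) (unitarymxP U_unitary) mul1mx !(mulmxA (diag_mx _)) !mulmx_diag.
  congr (_ *m (diag_mx _ *m _)); apply/rowP => i; rewrite !mxE.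
  by rewrite -expr2 normCK mulrC.
Qed.

End NonnegativeSpectralProjector.

Lemma one_sub_fidelity_le (R : numFieldType) (x y g : R) :
  0 <= x -> 0 <= y -> x + y = 1 -> g <= 1 ->
  1 - (x ^+ 2 + g * (x * y) *+ 2 + y ^+ 2) <= (1 - g) / 2.
Proof.
move=> x_ge0 y_ge0 xy1 g_le1; rewrite -subr_ge0.
have yE : y = 1 - x by rewrite -xy1 addrC addKr.
have -> : (1 - g) / 2 - (1 - (x ^+ 2 + g * (x * y) *+ 2 + y ^+ 2))
    = (1 - g) * (x - y) ^+ 2 / 2 by rewrite yE; field.
rewrite mulr_ge0 ?invr_ge0 ?ler0n // mulr_ge0 ?subr_ge0 // real_exprn_even_ge0 //.
by rewrite rpredB // ger0_real.
Qed.

Lemma half_angle_exists (C : numClosedFieldType) (p : C) : 0 <= p <= 1 ->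
  exists a b : C, [/\ a \is Num.real, b \is Num.real, a ^+ 2 + b ^+ 2 = 1,
                    a ^+ 2 - b ^+ 2 = sqrtC (1 - p) & a * b *+ 2 = sqrtC p].
Proof.
case/andP => p_ge0 p_le1; set g := sqrtC (1 - p).
have g_ge0 : 0 <= g by rewrite sqrtC_ge0 subr_ge0.
have g_le1 : g <= 1.
  by rewrite -sqrtC1 ler_sqrtC ?nnegrE ?subr_ge0 ?ler01 // lerBlDr lerDl.
have half_ge0 x : 0 <= x -> 0 <= x / 2 by move=> x_ge0; rewrite mulr_ge0 ?invr_ge0 ?ler0n.
set a := sqrtC ((1 + g) / 2); set b := sqrtC ((1 - g) / 2).
have a_ge0 : 0 <= a by rewrite sqrtC_ge0 half_ge0 // addr_ge0.
have b_ge0 : 0 <= b by rewrite sqrtC_ge0 half_ge0 // subr_ge0.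
have a2 : a ^+ 2 = (1 + g) / 2 by rewrite sqrtCK.
have b2 : b ^+ 2 = (1 - g) / 2 by rewrite sqrtCK.
have p_eq : p = 1 - g ^+ 2 by rewrite sqrtCK subKr.
exists a, b; split.
- exact: ger0_real.
- exact: ger0_real.
- by rewrite a2 b2; field.
- by rewrite a2 b2; field.
- have ab_sq : (a * b *+ 2) ^+ 2 = p.
    by rewrite -mulr_natl !exprMn a2 b2 p_eq; field.
  by rewrite -ab_sq sqrCK // mulrn_wge0 // mulr_ge0.
Qed.

Section Qubit.
Variable C : numClosedFieldType.

Definition pauli_x : 'M[C]_2 := \matrix_(i, j) (i != j)%:R.

Lemma tnorm_pauli_x (k : C) : 0 <= k -> tnorm (k *: pauli_x) = k *+ 2.
Proof.
move=> k_ge0; rewrite (@tnormE _ _ _ k%:M).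
- by rewrite mxtrace_scalar.
- by rewrite -diag_const_mx; apply: psdmx_diag => i; rewrite mxE.
- apply/matrixP => i j; rewrite !mxE !big_ord_recl !big_ord0 !mxE /=.
  by case: i => [[|[|i]]] Hi //=; case: j => [[|[|j]]] Hj //=;
    rewrite ?(mulr1, mulr0, mulr1n, mulr0n, rmorph0) ?geC0_conj //; ring.
Qed.

Lemma density_delta n (i : 'I_n) : density (delta_mx i i : 'M[C]_n).
Proof.
have -> : delta_mx i i = diag_mx (delta_mx 0 i) :> 'M[C]_n.
  apply/matrixP => j k; rewrite !mxE eqxx /=.
  case: (eqVneq j k) => [<-|jk]; first by rewrite andbb mulr1n.
  by rewrite mulr0n; case: (eqVneq j i) => // ji; rewrite -ji eq_sym (negPf jk).
split; first by apply: psdmx_diag => j; rewrite mxE ler0n.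
rewrite mxtrace_diag (bigD1 i) //= big1 => [|j ji]; last by rewrite mxE (negPf ji) andbF.
by rewrite mxE !eqxx addr0.
Qed.

Variables a b : C.
Hypotheses (a_real : a \is Num.real) (b_real : b \is Num.real).

Let a_conj : a^* = a := conj_Creal a_real.
Let b_conj : b^* = b := conj_Creal b_real.

Definition qubit_rot (s : C) : 'M[C]_2 :=
  \matrix_(i, j) (if (i : nat) == j then a else if (i : nat) == 0 then - (s * b) else s * b).

Definition qubit_state (s : C) : 'cV[C]_2 := \col_i (if (i : nat) == 0 then a else s * b).

Lemma qubit_rot_unitary s : a ^+ 2 + b ^+ 2 = 1 -> s^* = s -> s * s = 1 ->
  qubit_rot s \is unitarymx.
Proof.
move=> ab1 s_conj ss1; apply/unitarymxP/matrixP => i j.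
have ab1' : a * a + s * s * (b * b) = 1 by rewrite ss1 mul1r -!expr2.
rewrite !mxE !big_ord_recl big_ord0 !mxE /=.
by case: i => [[|[|i]]] Hi //=; case: j => [[|[|j]]] Hj //=;
  rewrite ?(rmorphN, rmorphM) /= ?s_conj ?a_conj ?b_conj; [rewrite -ab1'; ring|ring|ring|rewrite -ab1'; ring].
Qed.

Lemma qubit_rot_delta s s' : s'^* = s' ->
  qubit_rot s *m delta_mx 0 0 *m (qubit_rot s') ^t* = qubit_state s *m (qubit_state s') ^t*.
Proof.
move=> s'_conj; apply/matrixP => i j.
rewrite !mxE !big_ord_recl !big_ord0 !mxE /=.
by case: i => [[|[|i]]] Hi //=; case: j => [[|[|j]]] Hj //=;
  rewrite ?big_ord_recl ?big_ord0 ?mxE /= ?(rmorphN, rmorphM) /= ?s'_conj ?a_conj ?b_conj; ring.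
Qed.

Lemma mxtrace_qubit_outer s s' : s'^* = s' ->
  \tr (qubit_state s *m (qubit_state s') ^t*) = a ^+ 2 + s * s' * b ^+ 2.
Proof.
move=> s'_conj; rewrite /mxtrace !big_ord_recl big_ord0 !mxE !big_ord1 !mxE /=.
by rewrite ?(rmorphN, rmorphM) /= s'_conj a_conj b_conj; ring.
Qed.

Lemma qubit_outer_sub :
  qubit_state 1 *m (qubit_state 1) ^t* - qubit_state (-1) *m (qubit_state (-1)) ^t*
  = (a * b *+ 2) *: pauli_x.
Proof.
apply/matrixP => i j; rewrite !mxE !big_ord1 !mxE /=.
by case: i => [[|[|i]]] Hi //=; case: j => [[|[|j]]] Hj //=;
  rewrite ?(rmorphN, rmorphM, rmorph1) /= ?a_conj ?b_conj; ring.
Qed.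

End Qubit.

Arguments pauli_x {C}.

Section Realization.
Variables (C : numClosedFieldType) (n k : nat) (rho : 'M[C]_n).
Variables (q : 'I_k -> C) (psi : 'I_k -> 'cV[C]_n).
Hypothesis rho_real : realization rho q psi.

Lemma sum_braket_realization (A : 'M[C]_n) :
  \sum_i q i * braket (psi i) A (psi i) = \tr (A *m rho).
Proof.
case: rho_real => _ _ _ <-; rewrite mulmx_sumr linear_sum /=; apply: eq_bigr => i _.
by rewrite -scalemxAr linearZ /= mxtrace_outer.
Qed.

Lemma mxtrace_realization : \tr rho = 1.
Proof.
case: (rho_real) => _ q_sum1 psi_unit _.
rewrite -[rho]mul1mx -sum_braket_realization -[RHS]q_sum1.
by apply: eq_bigr => i _; rewrite /braket mulmx1 psi_unit mulr1.
Qed.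

End Realization.

Section BobStrategy.
Variables (C : numClosedFieldType) (n : nat) (P : 'M[C]_n) (a b : C).
Hypotheses (P_trC : P ^t* = P) (P_idem : P *m P = P).
Hypotheses (a_real : a \is Num.real) (b_real : b \is Num.real) (ab1 : a ^+ 2 + b ^+ 2 = 1).

Local Notation Q := (1%:M - P).
Local Notation R s := (qubit_rot a b s).
Local Notation outer s s' := (qubit_state a b s *m (qubit_state a b s') ^t*).
Local Notation anc := (delta_mx 0 0 : 'M[C]_2).

Definition bob_U : 'M[C]_(n * 2) := tensmx P (R 1) + tensmx Q (R (-1)).

Lemma bob_U_unitary : bob_U \is unitarymx.
Proof.
have NN1 : (-1 : C) * -1 = 1 by rewrite mulrNN mulr1.
have /unitarymxP R1 := qubit_rot_unitary a_real b_real ab1 (conjC1 C) (mulr1 1).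
have /unitarymxP RN1 := qubit_rot_unitary a_real b_real ab1 (conjCN1 C) NN1.
apply/unitarymxP; rewrite /bob_U trCmxD !trC_tensmx P_trC proj_compl_trC //.
rewrite !mulmxDl !mulmxDr !tensmx_mul P_idem proj_compl_idem // proj_mul_compl //.
by rewrite compl_mul_proj // !tensmx0l addr0 add0r R1 RN1 -tensmxDl addrC subrK tensmx1.
Qed.

Lemma bob_outE psi : bob_out bob_U anc psi =
    tensmx (P *m (psi *m psi ^t*) *m P) (outer 1 1)
  + tensmx (P *m (psi *m psi ^t*) *m Q) (outer 1 (-1))
  + tensmx (Q *m (psi *m psi ^t*) *m P) (outer (-1) 1)
  + tensmx (Q *m (psi *m psi ^t*) *m Q) (outer (-1) (-1)).
Proof.
rewrite /bob_out /bob_U trCmxD !trC_tensmx P_trC proj_compl_trC //.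
rewrite -!(qubit_rot_delta a_real b_real _ (conjC1 C)) -!(qubit_rot_delta a_real b_real _ (conjCN1 C)).
(* [Q] is generalized so that distributivity does not split [1 - P]. *)
by move: Q => Q'; rewrite !mulmxDl !mulmxDr !tensmx_mul !addrA.
Qed.

Lemma ptrace1_bob_out psi : ptrace1 (bob_out bob_U anc psi) =
  braket psi P psi *: outer 1 1 + braket psi Q psi *: outer (-1) (-1).
Proof.
rewrite bob_outE !ptrace1D !ptrace1_tensmx !mxtrace_mul_outer P_idem proj_compl_idem //.
by rewrite proj_mul_compl // compl_mul_proj // !braket0 !scale0r !addr0.
Qed.

Lemma braket_ptrace2_bob_out psi :
  braket psi (ptrace2 (bob_out bob_U anc psi)) psi =
    braket psi P psi ^+ 2 + (a ^+ 2 - b ^+ 2) * (braket psi P psi * braket psi Q psi) *+ 2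
  + braket psi Q psi ^+ 2.
Proof.
rewrite bob_outE !ptrace2D !ptrace2_tensmx.
rewrite !(mxtrace_qubit_outer a_real b_real _ (conjC1 C)).
rewrite !(mxtrace_qubit_outer a_real b_real _ (conjCN1 C)).
rewrite !(mulr1, mulrNN, mulN1r, mul1r) ab1.
by move: Q => Q'; rewrite !braketD !braketZ !braket_outer; ring.
Qed.

Lemma detect_cond_bob_le rho k (q : 'I_k -> C) psi : realization rho q psi ->
  detect_cond bob_U anc q psi <= (1 - (a ^+ 2 - b ^+ 2)) / 2.
Proof.
case=> q_ge0 q_sum1 psi_unit _; rewrite /detect_cond.
apply: (@le_trans _ _ (\sum_i q i * ((1 - (a ^+ 2 - b ^+ 2)) / 2))); last first.
  by rewrite -big_distrl /= q_sum1 mul1r.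
apply: ler_sum => i _; apply: ler_wpM2l => //.
rewrite -/(braket _ _ _) braket_ptrace2_bob_out; apply: one_sub_fidelity_le.
- exact: (psdmx_proj P_trC P_idem).
- exact: (psdmx_proj (proj_compl_trC P_trC) (proj_compl_idem P_idem)).
- by rewrite -braketD addrC subrK /braket mulmx1 psi_unit.
- have b2_ge0 : 0 <= b ^+ 2 by rewrite real_exprn_even_ge0.
  by rewrite -ab1 lerD2l (le_trans _ b2_ge0) // oppr_le0.
Qed.

Lemma bob_kept_realization rho k (q : 'I_k -> C) psi : realization rho q psi ->
  bob_kept bob_U anc q psi =
    \tr (P *m rho) *: outer 1 1 + (1 - \tr (P *m rho)) *: outer (-1) (-1).
Proof.
move=> rho_real; rewrite /bob_kept.
under eq_bigr do rewrite ptrace1_bob_out scalerDr !scalerA.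
rewrite big_split /= -!scaler_suml !(sum_braket_realization rho_real).
by rewrite mulmxBl mul1mx linearB /= (mxtrace_realization rho_real).
Qed.

Lemma bob_kept_sub rho0 k0 (q0 : 'I_k0 -> C) psi0 rho1 k1 (q1 : 'I_k1 -> C) psi1 :
  realization rho0 q0 psi0 -> realization rho1 q1 psi1 ->
  bob_kept bob_U anc q0 psi0 - bob_kept bob_U anc q1 psi1
    = (\tr (P *m (rho0 - rho1)) * (a * b *+ 2)) *: pauli_x.
Proof.
move=> rho0_real rho1_real; rewrite (bob_kept_realization rho0_real) (bob_kept_realization rho1_real) mulmxBr linearB /=.
rewrite -scalerA -qubit_outer_sub //.
move: (\tr (P *m rho0)) (\tr (P *m rho1)) => c0 c1.
by apply/matrixP => i j; rewrite !mxE; ring.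
Qed.

End BobStrategy.

Theorem theorem15 (C : numClosedFieldType) (n : nat) (rho0 rho1 : 'M[C]_n)
  (t p : C) :
  density rho0 -> density rho1 -> tnorm (rho0 - rho1) = t ->
  0 <= p <= 1 ->
  exists (m : nat) (tau : 'M[C]_m) (U : 'M[C]_(n * m)),
    density tau /\ U \is unitarymx /\
    forall (k0 : nat) (q0 : 'I_k0 -> C) (psi0 : 'I_k0 -> 'cV[C]_n)
           (k1 : nat) (q1 : 'I_k1 -> C) (psi1 : 'I_k1 -> 'cV[C]_n),
      realization rho0 q0 psi0 -> realization rho1 q1 psi1 ->
      tnorm (bob_kept U tau q0 psi0 - bob_kept U tau q1 psi1) = t * sqrtC p
      /\ (detect_cond U tau q0 psi0 + detect_cond U tau q1 psi1) / 2
           <= (1 - sqrtC (1 - p)) / 2.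
Proof.
move=> [rho0_psd tr_rho0] [rho1_psd tr_rho1] <- p_range.
have [a [b [a_real b_real ab1 ab_cos ab_sin]]] := half_angle_exists p_range.
have Delta_herm : (rho0 - rho1) ^t* = rho0 - rho1 by rewrite trCmxB !psdmx_trC.
have tr_Delta : \tr (rho0 - rho1) = 0 by rewrite linearB /= tr_rho0 tr_rho1 subrr.
have [U [d [U_unitary d_real DeltaE]]] := herm_spectral Delta_herm.
have := tnorm_nonneg_proj U_unitary d_real DeltaE.
have := mxtrace_nonneg_proj_mul_ge0 U_unitary DeltaE.
have := nonneg_proj_idem d U_unitary; have := nonneg_proj_trC U d.
move: (nonneg_proj U d) => P P_trC P_idem c_ge0 tnorm_Delta.
exists 2, (delta_mx 0 0), (bob_U P a b); split; first exact: density_delta.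
split; first exact: bob_U_unitary.
move=> k0 q0 psi0 k1 q1 psi1 R0 R1; split.
- rewrite (bob_kept_sub P_trC P_idem a_real b_real R0 R1) ab_sin tnorm_pauli_x.
    by rewrite tnorm_Delta tr_Delta subr0 mulrnAl.
  by rewrite mulr_ge0 ?sqrtC_ge0; case/andP: p_range.
- have detect_le := detect_cond_bob_le P_trC P_idem a_real b_real ab1.
  rewrite ler_pM2r ?invr_gt0 ?ltr0n // [leRHS]splitr -ab_cos.
  by rewrite lerD // (detect_le _ _ _ _ R0, detect_le _ _ _ _ R1).
Qed.
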